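(* Let $R$ be a finite set with $|R|=k$ and two binary operations $\oplus,\odot$, with structure matrices $M_\oplus,M_\odot\in\mathcal L_{k\times k^2}$, so that $\vec{x\oplus y}=M_\oplus\ltimes x\ltimes y$ and $\vec{x\odot y}=M_\odot\ltimes x\ltimes y$ for the vector forms $x,y\in\Delta_k$. Then: (i) $\oplus$ is commutative iff $M_\oplus=M_\oplus W_{[k,k]}$; (ii) $\oplus$ is associative iff $M_\oplus\ltimes M_\oplus=M_\oplus(I_k\otimes M_\oplus)$; (iii) $\delta_k^k$ is the identity for $\oplus$ iff $M_\oplus\ltimes\delta_k^k=M_\oplus W_{[k,k]}\ltimes\delta_k^k=I_k$; (iv) $(R,\oplus)$ has inverses iff there exists a unary operation $\neg$ on $R$, with structure matrix $M_\neg\in\mathcal L_{k\times k}$, such that $M_\oplus(I_k\otimes M_\neg)\mathrm{PR}_k=\delta_k^k\mathbf 1_k^T$; (v) $\odot$ is associative iff $M_\odot\ltimes M_\odot=M_\odot(I_k\otimes M_\odot)$; (vi) $\delta_k^1$ is the identity for $\odot$ iff $M_\odot\ltimes\delta_k^1=M_\odot W_{[k,k]}\ltimes\delta_k^1=I_k$; (vii) both distributive laws hold iff (a) $M_\odot\ltimes M_\oplus=M_\oplus\ltimes M_\odot\ltimes(I_{k^2}\otimes M_\odot)\ltimes(I_k\otimes W_{[k,k]})\ltimes(I_{k^2}\otimes\mathrm{PR}_k)$ and (b) $M_\odot(I_k\otimes M_\oplus)=M_\oplus\ltimes M_\odot\ltimes(I_{k^2}\otimes M_\odot)\ltimes(I_k\otimes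 W_{[k,k]})\ltimes\mathrm{PR}_k$.
   Context: Semi-tensor product: for $A\in\mathcal M_{m\times n}$, $B\in\mathcal M_{p\times q}$ and $t=\mathrm{lcm}(n,p)$, $A\ltimes B:=(A\otimes I_{t/n})(B\otimes I_{t/p})$; all matrix products above are semi-tensor products. $\delta_k^i$ is the $i$-th column of $I_k$, $\Delta_k=\{\delta_k^1,\dots,\delta_k^k\}$, and $\mathcal L_{m\times n}$ is the set of $m\times n$ matrices all of whose columns lie in $\Delta_m$. Elements of $R$ are labeled $1,2,\dots,k-1,0$ and represented in vector form by $i\mapsto\delta_k^i$ ($1\le i\le k-1$), $0\mapsto\delta_k^k$; by convention $\delta_k^1$ represents the candidate multiplicative identity $\mathbf 1$ and $\delta_k^k$ the candidate additive identity $\mathbf 0$. The swap matrix is $W_{[m,n]}=[I_n\otimes\delta_m^1,\dots,I_n\otimes\delta_m^m]$ (so $W_{[m,n]}xy=yx$ for $x\in\mathbb R^m,y\in\mathbb R^n$); the power-reducing matrix is $\mathrm{PR}_k=\mathrm{diag}(\delta_k^1,\dots,\delta_k^k)\in\mathcal L_{k^2\times k}$ (so $\mathrm{PR}_kx=x\ltimes x$ for $x\in\Delta_k$); $\mathbf 1_k$ is the all-ones column vector of length $k$. *)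

From HB Require Import structures.
From mathcomp Require Import all_boot all_order all_algebra.
From mathcomp Require Import mxtens.
Set Implicit Arguments. Unset Strict Implicit. Unset Printing Implicit Defensive.
Import GRing.Theory.
Local Open Scope ring_scope.

Section STP.
Variable K : nzRingType.

Lemma stp_dim_proof (n p : nat) :
  (n * (lcmn n p %/ n) = p * (lcmn n p %/ p))%N.
Proof.
by rewrite (mulnC n) (mulnC p) !divnK ?dvdn_lcml ?dvdn_lcmr.
Qed.

(* Semi-tensor product: for A (m x n), B (p x q), t = lcm(n,p),
   A |x B := (A (x) I_{t/n}) (B (x) I_{t/p}).  The inner dimensions
   n * (t/n) and p * (t/p) are both t; the cast only identifies them. *)
Definition stp (m n p q : nat) (A : 'M[K]_(m, n)) (B : 'M[K]_(p, q))
  : 'M[K]_((m * (lcmn n p %/ n))%N, (q * (lcmn n p %/ p))%N) :=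
  (A *t (1%:M : 'M[K]_(lcmn n p %/ n)%N))
    *m castmx (esym (stp_dim_proof n p), erefl _)
              (B *t (1%:M : 'M[K]_(lcmn n p %/ p)%N)).

(* Matrices of possibly different (non-convertible) dimension expressions,
   packed with their dimensions; equality of packs = same dimensions and
   same entries. *)
Definition pk (m n : nat) (A : 'M[K]_(m, n)) : {d : nat * nat & 'M[K]_(d.1, d.2)} :=
  existT (fun d : nat * nat => 'M[K]_(d.1, d.2)) (m, n) A.

(* delta_k^i : the i-th column of I_k (1-based, 1 <= i <= k) *)
Definition delta (k i : nat) : 'cV[K]_k := \col_(j < k) ((j.+1 == i)%:R).

Definition in_Delta (k : nat) (v : 'cV[K]_k) : Prop :=
  exists2 i : nat, (0 < i <= k)%N & v = delta k i.

Definition logical_mx (m n : nat) (A : 'M[K]_(m, n)) : Prop :=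
  forall j : 'I_n, in_Delta (col j A).

(* swap matrix W_{[m,n]} = [I_n (x) delta_m^1, ..., I_n (x) delta_m^m]
   (mn x mn).  Column a*n+b (block a < m, column b < n of I_n (x) delta_m^{a+1})
   equals delta_n^{b+1} (x) delta_m^{a+1}, whose 1 sits in row b*m+a. *)
Definition swap_mx (m n : nat) : 'M[K]_(m * n, m * n) :=
  \matrix_(r, c) ((r : nat) == (c %% n) * m + c %/ n)%N%:R.

(* power-reducing matrix PR_k = diag(delta_k^1, ..., delta_k^k) (k^2 x k):
   column c (0-based) is the block delta_k^{c+1} placed in rows c*k .. c*k+k-1 *)
Definition pr_mx (k : nat) : 'M[K]_(k * k, k) :=
  \matrix_(r, c) ((r : nat) == c * k + c)%N%:R.

Definition ones_row (k : nat) : 'M[K]_(1, k) := const_mx 1.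

End STP.

Arguments pk {K m n}.
Arguments delta {K}.
Arguments swap_mx {K}.
Arguments pr_mx {K}.
Arguments ones_row {K}.

Notation "A |x B" := (stp A B) (at level 40, left associativity).
Notation "A =pk= B" := (pk A = pk B) (at level 70, no associativity).

(* vector form of an element of a finite set R under a labeling
   lab : R -> 'I_k (0-based index i  <->  delta_k^{i+1}). *)
Definition vform (K : nzRingType) (R : Type) (k : nat) (lab : R -> 'I_k) (x : R)
  : 'cV[K]_k := delta k (lab x).+1.

(* A logical matrix is determined by its index map g: column c is the unit
   vector with its 1 in row g c.  The vectors delta_k^i and 1_k^T and the
   identity, swap and power-reducing matrices are logical, and products,
   Kronecker products and hence semi-tensor products of logical matrices are
   logical, with index maps composed from those of the factors (in mixed radix
   for Kronecker factors); two logical matrices of equal size are equal iff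
   their index maps agree on all columns.  Reading column indices in radix k
   with digits lab x, lab y, lab z, both sides of each matrix identity have
   index maps sending these digits to the labels of the two sides of the
   corresponding algebraic law, so, lab being a bijection, the identity holds
   iff the law does. *)
From HB Require Import structures.
From mathcomp Require Import all_boot all_order all_algebra.
From mathcomp Require Import mxtens.
From Stdlib Require Import Setoid Eqdep_dec.
Set Implicit Arguments. Unset Strict Implicit. Unset Printing Implicit Defensive.
Import GRing.Theory.
Local Open Scope ring_scope.

Lemma mixed_radix_lt a b m n : (a < m)%N -> (b < n)%N -> (a * n + b < m * n)%N.
Proof. by move=> ha hb; exact: (mxtens_index_proof (Ordinal ha, Ordinal hb)). Qed.

Lemma mixed_radix_eq i a b n : (b < n)%N ->
  (i == a * n + b)%N = (i %/ n == a)%N && (i %% n == b)%N.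
Proof.
move=> hb; apply/eqP/andP => [->|[/eqP <- /eqP <-]]; last by rewrite -divn_eq.
have n_gt0 : (0 < n)%N by case: n hb.
by rewrite divnMDl // modnMDl divn_small // modn_small // addn0.
Qed.

Section LogicalIndexMaps.
Variable K : nzRingType.

(* Entries are extended by 0 outside the matrix, so that matrices whose
   dimensions are equal but not convertible can be compared entrywise. *)
Definition entry m n (A : 'M[K]_(m, n)) (i j : nat) : K :=
  if (insub i : option 'I_m) is Some i' then
    if (insub j : option 'I_n) is Some j' then A i' j' else 0 else 0.

Lemma entry_ord m n (A : 'M[K]_(m, n)) (i : 'I_m) (j : 'I_n) : entry A i j = A i j.
Proof. by rewrite /entry !valK. Qed.

Lemma entry_oob m n (A : 'M[K]_(m, n)) i j :
  (m <= i)%N || (n <= j)%N -> entry A i j = 0.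
Proof.
rewrite /entry; case: insubP => [i' hi _|//]; case: insubP => [j' hj _|//].
by rewrite leqNgt hi /= leqNgt hj.
Qed.

Lemma entry_mul m n q (A : 'M[K]_(m, n)) (B : 'M[K]_(n, q)) i j :
  entry (A *m B) i j = \sum_(l < n) entry A i l * entry B l j.
Proof.
have [hi|hi] := ltnP i m; last first.
  by rewrite entry_oob ?hi // big1 // => l _; rewrite entry_oob ?hi ?mul0r.
have [hj|hj] := ltnP j q; last first.
  by rewrite entry_oob ?hj ?orbT // big1 // => l _; rewrite (entry_oob B) ?hj ?orbT ?mulr0.
rewrite -[i]/(val (Ordinal hi)) -[j]/(val (Ordinal hj)) entry_ord mxE.
by apply: eq_bigr => l _; rewrite !entry_ord.
Qed.

Lemma entry_tens m n p q (A : 'M[K]_(m, n)) (B : 'M[K]_(p, q)) i j :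
  entry (A *t B) i j = entry A (i %/ p) (j %/ q) * entry B (i %% p) (j %% q).
Proof.
have [hi|hi] := ltnP i (m * p); last first.
  rewrite entry_oob ?hi //; case: p A B hi => [|p] A B hi.
    by rewrite (entry_oob B) ?mulr0 // modn0.
  by rewrite (entry_oob A) ?mul0r // leq_divRL // hi.
have [hj|hj] := ltnP j (n * q); last first.
  rewrite entry_oob ?hj ?orbT //; case: q A B hj => [|q] A B hj.
    by rewrite (entry_oob B) ?mulr0 ?orbT // modn0.
  by rewrite (entry_oob A) ?mul0r // [X in _ || X]leq_divRL // hj orbT.
rewrite -[i]/(val (Ordinal hi)) -[j]/(val (Ordinal hj)) entry_ord mxE.
rewrite -[X in entry A X]/(val (mxtens_unindex (Ordinal hi)).1).
rewrite -[X in entry A _ X]/(val (mxtens_unindex (Ordinal hj)).1).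
rewrite -[X in entry B X]/(val (mxtens_unindex (Ordinal hi)).2).
rewrite -[X in entry B _ X]/(val (mxtens_unindex (Ordinal hj)).2).
by rewrite !entry_ord.
Qed.

Definition logical_of m n (A : 'M[K]_(m, n)) (g : nat -> nat) : Prop :=
  (forall j, (j < n)%N -> (g j < m)%N) /\
  (forall i j, entry A i j = ((i == g j) && (j < n)%N)%:R).

Lemma logical_ofP m n (A : 'M[K]_(m, n)) g :
  (forall j, (j < n)%N -> (g j < m)%N) ->
  (forall (i : 'I_m) (j : 'I_n), A i j = (i == g j :> nat)%:R) -> logical_of A g.
Proof.
move=> g_lt eqA; split => // i j.
have [hj|hj] := ltnP j n; last by rewrite entry_oob ?hj ?orbT // andbF.
have [hi|hi] := ltnP i m; last first.
  by rewrite entry_oob ?hi //; case: eqP => // ei; move: (g_lt j hj); rewrite -ei ltnNge hi.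
by rewrite -[i]/(val (Ordinal hi)) -[j]/(val (Ordinal hj)) entry_ord eqA andbT.
Qed.

Lemma logical_of_ext m n (A : 'M[K]_(m, n)) g g' :
  (forall j, (j < n)%N -> g j = g' j) -> logical_of A g -> logical_of A g'.
Proof.
move=> eqg [g_lt eqA]; split => [j hj|i j]; first by rewrite -eqg ?g_lt.
by rewrite eqA; have [/eqg ->|] := ltnP j n; rewrite ?andbF.
Qed.

Lemma logical_of_mul m n q (A : 'M[K]_(m, n)) (B : 'M[K]_(n, q)) g h :
  logical_of A g -> logical_of B h -> logical_of (A *m B) (g \o h).
Proof.
move=> [g_lt eqA] [h_lt eqB]; split => [j hj|i j]; first exact/g_lt/h_lt.
rewrite entry_mul; have [hj|hj] := ltnP j q; last first.
  by rewrite andbF big1 // => l _; rewrite eqB ltnNge hj andbF mulr0.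
rewrite andbT (bigD1 (Ordinal (h_lt j hj))) //= big1 ?addr0.
  by rewrite eqA eqB eqxx hj (h_lt j hj) andbT mulr1.
move=> l /eqP neq_l; rewrite eqB hj andbT.
by case: eqP => [eq_l|]; [case: neq_l; apply: val_inj | rewrite mulr0].
Qed.

Lemma logical_of_tens m n p q (A : 'M[K]_(m, n)) (B : 'M[K]_(p, q)) g h :
  logical_of A g -> logical_of B h ->
  logical_of (A *t B) (fun c => g (c %/ q) * p + h (c %% q))%N.
Proof.
move=> [g_lt eqA] [h_lt eqB]; split => [j hj|i j].
  have q_gt0 : (0 < q)%N by case: (posnP q) hj => [->|//]; rewrite muln0.
  by apply: mixed_radix_lt; [apply: g_lt; rewrite ltn_divLR | apply: h_lt; rewrite ltn_mod].
rewrite entry_tens eqA eqB; have [->|q_gt0] := posnP q.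
  by rewrite modn0 muln0 ltn0 !andbF mulr0.
have -> : (j < n * q)%N = (j %/ q < n)%N && (j %% q < q)%N.
  by rewrite ltn_mod q_gt0 andbT ltn_divLR.
have [hj2|] := ltnP (j %% q) q; last by rewrite !andbF mulr0.
have [hj1|] := ltnP (j %/ q) n; last by rewrite !andbF mul0r.
by rewrite !andbT -natrM mulnb mixed_radix_eq // h_lt.
Qed.

Lemma logical_of_cast m n m' n' (e : (m = m') * (n = n')) (A : 'M[K]_(m, n)) g :
  logical_of A g -> logical_of (castmx e A) g.
Proof. by case: e => em en; subst m' n'; rewrite castmx_id. Qed.

Lemma logical_of_one n : logical_of (1%:M : 'M[K]_n) id.
Proof. by apply: logical_ofP => // i j; rewrite mxE. Qed.

Lemma logical_of_stp m n p q (A : 'M[K]_(m, n)) (B : 'M[K]_(p, q)) g h :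
  logical_of A g -> logical_of B h ->
  logical_of (A |x B) (fun c =>
    let s := (lcmn n p %/ n)%N in let t := (lcmn n p %/ p)%N in
    g ((h (c %/ t) * t + c %% t) %/ s) * s + (h (c %/ t) * t + c %% t) %% s)%N.
Proof.
move=> lA lB; apply: logical_of_mul (logical_of_tens lA (logical_of_one _)) _.
exact/logical_of_cast/(logical_of_tens lB (logical_of_one _)).
Qed.

Definition pk_logical r N (g : nat -> nat) (s : {d : nat * nat & 'M[K]_(d.1, d.2)}) :=
  projT1 s = (r, N) /\ logical_of (projT2 s) g.

Lemma pk_logical_cast r N r' N' g s :
  r = r' -> N = N' -> pk_logical r N g s -> pk_logical r' N' g s.
Proof. by move=> -> ->. Qed.

Lemma pk_logical_ext r N g g' s :
  (forall c, (c < N)%N -> g c = g' c) -> pk_logical r N g s -> pk_logical r N g' s.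
Proof.
by case: s => [[a b] A] /= eqg [[ea eb] lA]; subst a b; split; last exact: logical_of_ext lA.
Qed.

Lemma pk_logical_tens m n p q (A : 'M[K]_(m, n)) (B : 'M[K]_(p, q)) r N P Q g h :
  pk_logical r N g (pk A) -> pk_logical P Q h (pk B) ->
  pk_logical (r * P) (N * Q) (fun c => g (c %/ Q) * P + h (c %% Q))%N (pk (A *t B)).
Proof. by move=> [[<- <-] lA] [[<- <-] lB]; split; last exact: logical_of_tens. Qed.

Lemma pk_logical_stp m n p q (A : 'M[K]_(m, n)) (B : 'M[K]_(p, q)) r N N' g h :
  pk_logical r N g (pk A) -> pk_logical N N' h (pk B) -> (0 < N)%N ->
  pk_logical r N' (fun c => g (h c)) (pk (A |x B)).
Proof.
move=> [[<- <-] lA] [[eNp <-] lB] N_gt0 /=; subst p.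
have lcm_nn : lcmn n n = n by apply/lcmn_idPl.
split; first by rewrite /= lcm_nn divnn N_gt0 !muln1.
apply: logical_of_ext (logical_of_stp lA lB) => c _ /=.
by rewrite lcm_nn divnn N_gt0 !divn1 !modn1 !muln1 !addn0.
Qed.

(* Here A |x B = A (B (x) I_t). *)
Lemma pk_logical_stp_dvd m n p q (A : 'M[K]_(m, n)) (B : 'M[K]_(p, q)) r P Q t g h :
  pk_logical r (P * t) g (pk A) -> pk_logical P Q h (pk B) -> (0 < P)%N -> (0 < t)%N ->
  pk_logical r (Q * t) (fun c => g (h (c %/ t) * t + c %% t))%N (pk (A |x B)).
Proof.
move=> [[er en] lA] [[ep eq] lB] P_gt0 t_gt0 /=; subst r n P Q.
have lcm_pt : lcmn (p * t) p = (p * t)%N by apply/lcmn_idPl; apply: dvdn_mulr.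
have pt_gt0 : (0 < p * t)%N by rewrite muln_gt0 P_gt0.
split; first by rewrite /= lcm_pt divnn pt_gt0 mulKn // muln1.
apply: logical_of_ext (logical_of_stp lA lB) => c _ /=.
by rewrite lcm_pt divnn pt_gt0 mulKn // !divn1 !modn1 !muln1 !addn0.
Qed.

Lemma pk_logical_eqE m n m' n' (A : 'M[K]_(m, n)) (B : 'M[K]_(m', n')) r N g g' :
  pk_logical r N g (pk A) -> pk_logical r N g' (pk B) ->
  (pk A = pk B <-> forall c, (c < N)%N -> g c = g' c).
Proof.
move=> [[em en] [_ eqA]] [[em' en'] [_ eqB]] /=; subst m n m' n'; split => [eqAB c hc|eqg].
  have /(congr1 (fun A => entry A (g c) c)) := inj_pair2_eq_dec _
    (fun x y => eq_comparable x y) (fun d : nat * nat => 'M[K]_(d.1, d.2)) _ _ _ eqAB.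
  rewrite eqA eqB eqxx hc /= andbT; case: eqP => // _ /eqP.
  by rewrite oner_eq0.
congr pk; apply/matrixP => i j; rewrite -!entry_ord eqA eqB.
by rewrite eqg.
Qed.

Lemma pk_logical_one n : pk_logical n n id (pk (1%:M : 'M[K]_n)).
Proof. by split; last exact: logical_of_one. Qed.

Lemma pk_logical_delta k a : (0 < a <= k)%N ->
  pk_logical k 1 (fun=> a.-1) (pk (delta (K := K) k a)).
Proof.
case/andP => a_gt0 a_le; split => //; apply: logical_ofP => [j _|i j].
  by rewrite prednK.
by rewrite mxE -{1}(prednK a_gt0) eqSS.
Qed.

Lemma pk_logical_swap m n :
  pk_logical (m * n) (m * n) (fun c => c %% n * m + c %/ n)%N (pk (swap_mx (K := K) m n)).
Proof.
split => //=; apply: logical_ofP => [j hj|i j]; last by rewrite mxE.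
have n_gt0 : (0 < n)%N by case: (posnP n) hj => [->|//]; rewrite muln0.
by rewrite [(m * n)%N]mulnC mixed_radix_lt ?ltn_mod ?ltn_divLR.
Qed.

Lemma pk_logical_pr k : pk_logical (k * k) k (fun c => c * k + c)%N (pk (pr_mx (K := K) k)).
Proof.
by split => //=; apply: logical_ofP => [j hj|i j]; [exact: mixed_radix_lt | rewrite mxE].
Qed.

Lemma pk_logical_ones k : pk_logical 1 k (fun=> 0%N) (pk (ones_row (K := K) k)).
Proof. by split => //=; apply: logical_ofP => // i j; rewrite mxE; case: i => [[]]. Qed.

Lemma logical_mx_pk_logical m n (A : 'M[K]_(m, n)) :
  logical_mx A -> exists g, pk_logical m n g (pk A).
Proof.
move=> /fin_all_exists2 [f f_range eq_col].
exists (fun c => if (insub c : option 'I_n) is Some j then (f j).-1 else 0%N).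
split => //=; apply: logical_ofP => [j hj|i j].
  by rewrite insubT /=; case/andP: (f_range (Ordinal hj)) => f_gt0 f_le; rewrite prednK.
rewrite valK; have := congr1 (fun v : 'cV[K]_m => v i 0) (eq_col j); rewrite !mxE => ->.
by case/andP: (f_range j) => f_gt0 _; rewrite -{1}(prednK f_gt0) eqSS.
Qed.

End LogicalIndexMaps.

Section Labelling.
Variables (K : nzRingType) (R : finType) (k : nat) (k_gt0 : (0 < k)%N)
  (lab : R -> 'I_k) (unlab_ord : 'I_k -> R)
  (labK : cancel lab unlab_ord) (unlabK : cancel unlab_ord lab).

Definition unlab (u : nat) : R := unlab_ord (insubd (Ordinal k_gt0) u).

Lemma lab_unlab u : (u < k)%N -> lab (unlab u) = u :> nat.
Proof. by move=> hu; rewrite /unlab unlabK val_insubd hu. Qed.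

Lemma unlab_lab x : unlab (lab x) = x.
Proof. by rewrite /unlab valKd labK. Qed.

Lemma lab_val_inj x y : lab x = lab y :> nat -> x = y.
Proof. by move=> /val_inj /(can_inj labK). Qed.

Lemma lab_divk x : (lab x %/ k = 0)%N.
Proof. by rewrite divn_small. Qed.

Lemma lab_modk x : (lab x %% k = lab x)%N.
Proof. by rewrite modn_small. Qed.

Lemma modn_kk c : (c %% (k * k) = c %/ k %% k * k + c %% k)%N.
Proof.
rewrite {1}(divn_eq c k) {1}(divn_eq (c %/ k) k) mulnDl -mulnA -addnA modnMDl.
by rewrite modn_small // mixed_radix_lt ?ltn_mod.
Qed.

Lemma agree1_labE (g g' : nat -> nat) :
  (forall c, (c < k)%N -> g c = g' c) <-> (forall x, g (lab x) = g' (lab x)).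
Proof.
split => [eqg x|eqg c hc]; first exact: eqg.
by have := eqg (unlab c); rewrite lab_unlab.
Qed.

Lemma agree2_labE (g g' : nat -> nat) :
  (forall c, (c < k * k)%N -> g c = g' c) <->
  (forall x y, g (lab x * k + lab y)%N = g' (lab x * k + lab y)%N).
Proof.
split => [eqg x y|eqg c hc]; first exact/eqg/mixed_radix_lt.
have := eqg (unlab (c %/ k)) (unlab (c %% k)).
by rewrite !lab_unlab -?divn_eq ?ltn_mod ?ltn_divLR.
Qed.

Lemma agree3_labE (g g' : nat -> nat) :
  (forall c, (c < k * k * k)%N -> g c = g' c) <->
  (forall x y z, g ((lab x * k + lab y) * k + lab z)%N =
                 g' ((lab x * k + lab y) * k + lab z)%N).
Proof.
split => [eqg x y z|eqg c hc]; first exact/eqg/mixed_radix_lt/ltn_ord/mixed_radix_lt.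
have hc1 : (c %/ k < k * k)%N by rewrite ltn_divLR.
have := eqg (unlab (c %/ k %/ k)) (unlab (c %/ k %% k)) (unlab (c %% k)).
by rewrite !lab_unlab -?divn_eq ?ltn_mod ?ltn_divLR.
Qed.

Lemma pk_logical_vform x : pk_logical k 1 (fun=> nat_of_ord (lab x)) (pk (vform K lab x)).
Proof. by apply: pk_logical_delta; rewrite /= ltn_ord. Qed.

Lemma vform_delta x a : (0 < a <= k)%N -> vform K lab x = delta k a -> lab x = a.-1 :> nat.
Proof.
move=> ha; have lxa := pk_logical_eqE (pk_logical_vform x) (pk_logical_delta K ha).
by move=> /(congr1 pk) /lxa /(_ 0%N erefl).
Qed.

Definition idx_fun (f : R -> R) (c : nat) : nat := lab (f (unlab c)).

Lemma pk_logical_unary f (Mf : 'M[K]_k) : logical_mx Mf ->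
  (forall x, vform K lab (f x) =pk= Mf |x vform K lab x) ->
  pk_logical k k (idx_fun f) (pk Mf).
Proof.
move=> /logical_mx_pk_logical [g lMf] eqMf; apply: pk_logical_ext (lMf); apply/agree1_labE => x.
have lMfx := pk_logical_stp lMf (pk_logical_vform x) k_gt0.
have := (pk_logical_eqE (pk_logical_vform (f x)) lMfx).1 (eqMf x) 0 erefl.
by rewrite /idx_fun unlab_lab => ->.
Qed.

Lemma unary_structure f : exists Mf : 'M[K]_k,
  logical_mx Mf /\ forall x, vform K lab (f x) =pk= Mf |x vform K lab x.
Proof.
pose Mf : 'M[K]_k := \matrix_(i, j) (i == idx_fun f j :> nat)%:R.
have lMf : pk_logical k k (idx_fun f) (pk Mf).
  by split => //=; apply: logical_ofP => [j _|i j]; [exact: ltn_ord | rewrite mxE].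
exists Mf; split => [j | x].
  by exists (idx_fun f j).+1; [rewrite /= ltn_ord | apply/matrixP => i j0; rewrite !mxE eqSS].
apply/(pk_logical_eqE (pk_logical_vform (f x)) (pk_logical_stp lMf (pk_logical_vform x) k_gt0)).
by move=> c _; rewrite /idx_fun unlab_lab.
Qed.

Definition idx_op (op : R -> R -> R) (c : nat) : nat :=
  lab (op (unlab (c %/ k)) (unlab (c %% k))).

Lemma idx_opE op x y : idx_op op (lab x * k + lab y)%N = lab (op x y).
Proof. by rewrite /idx_op divnMDl // modnMDl lab_divk lab_modk addn0 !unlab_lab. Qed.

Lemma pk_logical_structure op (M : 'M[K]_(k, k * k)) : logical_mx M ->
  (forall x y, vform K lab (op x y) =pk= M |x vform K lab x |x vform K lab y) ->
  pk_logical k (k * k) (idx_op op) (pk M).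
Proof.
move=> /logical_mx_pk_logical [g lM] eqM; apply: pk_logical_ext (lM); apply/agree2_labE => x y.
have lMx := pk_logical_stp_dvd lM (pk_logical_vform x) k_gt0 k_gt0.
have lMxy := pk_logical_stp (pk_logical_cast erefl (mul1n k) lMx) (pk_logical_vform y) k_gt0.
have := (pk_logical_eqE (pk_logical_vform (op x y)) lMxy).1 (eqM x y) 0 erefl.
by rewrite lab_modk idx_opE => ->.
Qed.

Lemma kk_gt0 : (0 < k * k)%N.
Proof. by rewrite muln_gt0 k_gt0. Qed.

Lemma k_in_range : (0 < k <= k)%N.
Proof. by rewrite k_gt0 leqnn. Qed.

(* Evaluates index maps at radix-k numerals whose digits are labels; twelve
   rounds suffice for the four-digit numerals occurring below. *)
Ltac digits_simpl := cbv beta; do 12 rewrite ?mulnA ?divnMA ?modn_kk ?(divnMDl _ _ k_gt0)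
  ?modnMDl ?lab_divk ?lab_modk ?addn0 ?idx_opE ?unlab_lab.

Section Operation.
Variables (op : R -> R -> R) (M : 'M[K]_(k, k * k)) (logical_M : logical_mx M)
  (structure_M : forall x y, vform K lab (op x y) =pk= M |x vform K lab x |x vform K lab y).

Let lM := pk_logical_structure logical_M structure_M.

Lemma commutative_structureP : (forall x y, op x y = op y x) <-> M =pk= M |x swap_mx k k.
Proof.
have lMW := pk_logical_stp lM (pk_logical_swap K k k) kk_gt0.
rewrite (pk_logical_eqE lM lMW) agree2_labE; split => opC x y.
  by digits_simpl; rewrite opC.
by have := opC x y; digits_simpl; apply: lab_val_inj.
Qed.

Lemma associative_structureP : (forall x y z, op (op x y) z = op x (op y z)) <->
  M |x M =pk= M |x ((1%:M : 'M[K]_k) *t M).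
Proof.
have lMM := pk_logical_stp_dvd lM lM k_gt0 k_gt0.
have lMIM := pk_logical_cast erefl (mulnA k k k)
  (pk_logical_stp lM (pk_logical_tens (pk_logical_one K k) lM) kk_gt0).
rewrite (pk_logical_eqE lMM lMIM) agree3_labE; split => opA x y z.
  by digits_simpl; rewrite opA.
by have := opA x y z; digits_simpl; apply: lab_val_inj.
Qed.

Lemma identity_structureP a : (0 < a <= k)%N ->
  ((exists e, vform K lab e = delta k a /\ forall x, op e x = x /\ op x e = x) <->
   (M |x delta k a =pk= (1%:M : 'M[K]_k) /\
    M |x swap_mx k k |x delta k a =pk= (1%:M : 'M[K]_k))).
Proof.
move=> ha; have a1_lt : (a.-1 < k)%N by case/andP: ha => a_gt0 a_le; rewrite prednK.
set e := unlab a.-1; have lab_e : a.-1 = lab e by rewrite lab_unlab.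
have lMd := pk_logical_cast erefl (mul1n k)
  (pk_logical_stp_dvd lM (pk_logical_delta K ha) k_gt0 k_gt0).
have lMWd := pk_logical_cast erefl (mul1n k) (pk_logical_stp_dvd
  (pk_logical_stp lM (pk_logical_swap K k k) kk_gt0) (pk_logical_delta K ha) k_gt0 k_gt0).
rewrite (pk_logical_eqE lMd (pk_logical_one K k)) (pk_logical_eqE lMWd (pk_logical_one K k)).
rewrite !agree1_labE lab_e; split.
  move=> [e' [/(vform_delta ha) lab_e' e'_id]].
  have e'_e : e' = e by apply: lab_val_inj; rewrite lab_e' lab_e.
  rewrite e'_e in e'_id; split => x; digits_simpl.
  - by case: (e'_id x) => ->.
  - by case: (e'_id x) => _ ->.
move=> [e_idl e_idr]; exists e; split.
  by rewrite /vform -lab_e prednK //; case/andP: ha.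
by move=> x; split; apply: lab_val_inj; [have := e_idl x | have := e_idr x]; digits_simpl.
Qed.

Lemma inverse_structureE f (Mf : 'M[K]_k) : pk_logical k k (idx_fun f) (pk Mf) ->
  (M |x ((1%:M : 'M[K]_k) *t Mf) |x pr_mx k =pk= delta k k |x ones_row k <->
   forall x, op x (f x) = unlab k.-1).
Proof.
move=> lMf.
have lMIMf := pk_logical_stp lM (pk_logical_tens (pk_logical_one K k) lMf) kk_gt0.
have lLHS := pk_logical_stp lMIMf (pk_logical_pr K k) kk_gt0.
have lRHS := pk_logical_stp (pk_logical_delta K k_in_range) (pk_logical_ones K k) (ltn0Sn 0).
rewrite (pk_logical_eqE lLHS lRHS) agree1_labE /idx_fun.
have lab_zero : k.-1 = lab (unlab k.-1) by rewrite lab_unlab // prednK.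
by rewrite lab_zero; split => opf x; have := opf x; digits_simpl; [move/lab_val_inj | move=> ->].
Qed.

Lemma inverse_structureP :
  (forall z, vform K lab z = delta k k -> forall x, exists y, op x y = z) <->
  (exists (neg : R -> R) (Mneg : 'M[K]_k),
     logical_mx Mneg /\
     (forall x, vform K lab (neg x) =pk= Mneg |x vform K lab x) /\
     M |x ((1%:M : 'M[K]_k) *t Mneg) |x pr_mx k =pk= delta k k |x ones_row k).
Proof.
have zeroE z : vform K lab z = delta k k -> z = unlab k.-1.
  by move=> /(vform_delta k_in_range) lab_z; apply: lab_val_inj; rewrite lab_z lab_unlab // prednK.
split => [opV|[neg [Mneg [logical_Mneg [structure_Mneg eq_inv]]]]].
  have zero_delta : vform K lab (unlab k.-1) = delta k k.
    by rewrite /vform lab_unlab ?prednK // prednK.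
  have [neg negP] := fin_all_exists (opV _ zero_delta).
  have [Mneg [logical_Mneg structure_Mneg]] := unary_structure neg.
  exists neg, Mneg; do 2!split => //.
  exact/(inverse_structureE (pk_logical_unary logical_Mneg structure_Mneg)).
move=> z /zeroE -> x; exists (neg x); move: x.
exact/(inverse_structureE (pk_logical_unary logical_Mneg structure_Mneg)).
Qed.

End Operation.

Section Distributivity.
Variables (add mul : R -> R -> R) (Madd Mmul : 'M[K]_(k, k * k))
  (logical_Madd : logical_mx Madd) (logical_Mmul : logical_mx Mmul)
  (structure_Madd : forall x y,
     vform K lab (add x y) =pk= Madd |x vform K lab x |x vform K lab y)
  (structure_Mmul : forall x y,
     vform K lab (mul x y) =pk= Mmul |x vform K lab x |x vform K lab y).

Let lMadd := pk_logical_structure logical_Madd structure_Madd.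
Let lMmul := pk_logical_structure logical_Mmul structure_Mmul.

(* The swap moves z in front of y, so the common factor of both right-hand
   sides sends x y z w to (x * z) + (y * w). *)
Lemma pk_logical_distr_factor : exists2 g,
  pk_logical k (k * k * (k * k)) g (pk (Madd |x Mmul |x ((1%:M : 'M[K]_(k * k)) *t Mmul)
                                           |x ((1%:M : 'M[K]_k) *t swap_mx k k))) &
  forall x y z w, g ((lab x * k + lab y) * k * k + (lab z * k + lab w))%N =
                  lab (add (mul x z) (mul y w)).
Proof.
have kkk_gt0 : (0 < k * k * k)%N by rewrite muln_gt0 kk_gt0.
have kkk_gt0' : (0 < k * (k * k))%N by rewrite mulnA.
have k4E : (k * k * (k * k) = k * (k * k) * k)%N by rewrite !mulnA.
have lMM := pk_logical_stp_dvd lMadd lMmul k_gt0 k_gt0.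
have lMMIM := pk_logical_stp lMM (pk_logical_tens (pk_logical_one K (k * k)) lMmul) kkk_gt0.
have := pk_logical_stp_dvd (pk_logical_cast erefl k4E lMMIM)
  (pk_logical_tens (pk_logical_one K k) (pk_logical_swap K k k)) kkk_gt0' k_gt0.
move=> /(pk_logical_cast erefl (esym k4E)) lF.
by eexists; first exact: lF; move=> x y z w; digits_simpl.
Qed.

Lemma right_distributive_structureP :
  (forall x y z, mul (add x y) z = add (mul x z) (mul y z)) <->
  Mmul |x Madd =pk=
    Madd |x Mmul |x ((1%:M : 'M[K]_(k * k)) *t Mmul) |x ((1%:M : 'M[K]_k) *t swap_mx k k)
         |x ((1%:M : 'M[K]_(k * k)) *t pr_mx k).
Proof.
have [g lF g_spec] := pk_logical_distr_factor.
have lL := pk_logical_stp_dvd lMmul lMadd k_gt0 k_gt0.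
have k4_gt0 : (0 < k * k * (k * k))%N by rewrite muln_gt0 kk_gt0.
have lR := pk_logical_stp lF (pk_logical_tens (pk_logical_one K (k * k)) (pk_logical_pr K k))
  k4_gt0.
rewrite (pk_logical_eqE lL lR) agree3_labE.
split => distr x y z; [|apply: lab_val_inj; move: (distr x y z)];
  digits_simpl; rewrite g_spec //.
by rewrite distr.
Qed.

Lemma left_distributive_structureP :
  (forall x y z, mul x (add y z) = add (mul x y) (mul x z)) <->
  Mmul |x ((1%:M : 'M[K]_k) *t Madd) =pk=
    Madd |x Mmul |x ((1%:M : 'M[K]_(k * k)) *t Mmul) |x ((1%:M : 'M[K]_k) *t swap_mx k k)
         |x pr_mx k.
Proof.
have [g lF g_spec] := pk_logical_distr_factor.
have lL := pk_logical_cast erefl (mulnA k k k)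
  (pk_logical_stp lMmul (pk_logical_tens (pk_logical_one K k) lMadd) kk_gt0).
have lR := pk_logical_cast erefl (mulnA k k k)
  (pk_logical_stp_dvd lF (pk_logical_pr K k) kk_gt0 kk_gt0).
rewrite (pk_logical_eqE lL lR) agree3_labE.
split => distr x y z; [|apply: lab_val_inj; move: (distr x y z)];
  digits_simpl; rewrite g_spec //.
by rewrite distr.
Qed.

End Distributivity.
End Labelling.

Unset Implicit Arguments.
Theorem theorem3p1 (K : nzRingType) (R : finType) (k : nat) (k_gt0 : (0 < k)%N)
  (lab : R -> 'I_k) (lab_bij : bijective lab)
  (add mul : R -> R -> R) (Madd Mmul : 'M[K]_(k, k * k))
  (HLadd : logical_mx Madd) (HLmul : logical_mx Mmul)
  (Hadd : forall x y : R,
      vform K lab (add x y) =pk= Madd |x vform K lab x |x vform K lab y)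
  (Hmul : forall x y : R,
      vform K lab (mul x y) =pk= Mmul |x vform K lab x |x vform K lab y) :
  (* (i) commutativity of add *)
  ((forall x y : R, add x y = add y x) <->
     Madd =pk= Madd |x swap_mx k k) /\
  (* (ii) associativity of add *)
  ((forall x y z : R, add (add x y) z = add x (add y z)) <->
     Madd |x Madd =pk= Madd |x ((1%:M : 'M[K]_k) *t Madd)) /\
  (* (iii) delta_k^k is the identity for add *)
  ((exists e : R, vform K lab e = delta k k /\
                  forall x : R, add e x = x /\ add x e = x) <->
     (Madd |x delta k k =pk= (1%:M : 'M[K]_k) /\
      Madd |x swap_mx k k |x delta k k =pk= (1%:M : 'M[K]_k))) /\
  (* (iv) (R, add) has inverses w.r.t. the element represented by delta_k^k *)
  ((forall z : R, vform K lab z = delta k k ->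
      forall x : R, exists y : R, add x y = z) <->
     (exists (neg : R -> R) (Mneg : 'M[K]_k),
        logical_mx Mneg /\
        (forall x : R, vform K lab (neg x) =pk= Mneg |x vform K lab x) /\
        Madd |x ((1%:M : 'M[K]_k) *t Mneg) |x pr_mx k
          =pk= delta k k |x ones_row k)) /\
  (* (v) associativity of mul *)
  ((forall x y z : R, mul (mul x y) z = mul x (mul y z)) <->
     Mmul |x Mmul =pk= Mmul |x ((1%:M : 'M[K]_k) *t Mmul)) /\
  (* (vi) delta_k^1 is the identity for mul *)
  ((exists e : R, vform K lab e = delta k 1 /\
                  forall x : R, mul e x = x /\ mul x e = x) <->
     (Mmul |x delta k 1 =pk= (1%:M : 'M[K]_k) /\
      Mmul |x swap_mx k k |x delta k 1 =pk= (1%:M : 'M[K]_k))) /\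
  (* (vii) both distributive laws *)
  (((forall x y z : R, mul x (add y z) = add (mul x y) (mul x z)) /\
    (forall x y z : R, mul (add x y) z = add (mul x z) (mul y z))) <->
     (Mmul |x Madd =pk=
        Madd |x Mmul |x ((1%:M : 'M[K]_(k * k)) *t Mmul)
             |x ((1%:M : 'M[K]_k) *t swap_mx k k)
             |x ((1%:M : 'M[K]_(k * k)) *t pr_mx k) /\
      Mmul |x ((1%:M : 'M[K]_k) *t Madd) =pk=
        Madd |x Mmul |x ((1%:M : 'M[K]_(k * k)) *t Mmul)
             |x ((1%:M : 'M[K]_k) *t swap_mx k k)
             |x pr_mx k)).
Proof.
case: lab_bij => unlab_ord labK unlabK.
split; first exact: (commutative_structureP k_gt0 labK unlabK HLadd Hadd).
split; first exact: (associative_structureP k_gt0 labK unlabK HLadd Hadd).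
split; first exact: (identity_structureP k_gt0 labK unlabK HLadd Hadd (k_in_range k_gt0)).
split; first exact: (inverse_structureP k_gt0 labK unlabK HLadd Hadd).
split; first exact: (associative_structureP k_gt0 labK unlabK HLmul Hmul).
split; first by apply: (identity_structureP k_gt0 labK unlabK HLmul Hmul); rewrite k_gt0.
rewrite (left_distributive_structureP k_gt0 labK unlabK HLadd HLmul Hadd Hmul).
rewrite (right_distributive_structureP k_gt0 labK unlabK HLadd HLmul Hadd Hmul).
exact: and_comm.
Qed.
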